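(* Let $p$ be an odd prime, $R=F_p+vF_p$ with $v^2=v$, let $\vartheta=1-2v$ or $\vartheta=-1+2v$, and let $C$ be a $\vartheta$-constacyclic code of length $n$ over $R$ with generating set in standard form $\{vg_{1-v}(x),(1-v)g_v(x)\}$. Then: (1) $\phi_\vartheta(C^\perp)=[h_{1-v}^*(x)h_v^*(x)]$; (2) $\phi_\vartheta(C^\perp)=(\phi_\vartheta(C))^\perp$.
   Context: Write $\vartheta=\lambda+v\mu$ with $\lambda,\mu\in F_p$. A $\vartheta$-constacyclic code of length $n$ over $R$ is an $R$-submodule of $R^n$ closed under $(c_0,\dots,c_{n-1})\mapsto(\vartheta c_{n-1},c_0,\dots,c_{n-2})$, identified with an ideal of $R[x]/\langle x^n-\vartheta\rangle$ via $(c_i)\mapsto\sum c_ix^i$. Duals are with respect to the standard Euclidean inner product (on $R^n$ and on $F_p^{2n}$). A set $\{vg_1(x),(1-v)g_2(x)\}$ is a generating set in standard form for $C$ if it generates $C$ as an ideal, each $g_i\in F_p[x]$ is monic or $0$, $g_1\mid x^n-(\lambda+\mu)$ if $g_1\ne0$, and $g_2\mid x^n-\lambda$ if $g_2\ne0$. Let $h_{1-v},h_v\in F_p[x]$ be given by $g_{1-v}h_{1-v}=x^n-(\lambda+\mu)$ and $g_vh_v=x^n-\lambda$; for $h\in\{h_{1-v},h_v\}$, $h^*(x)=\frac{1}{h(0)}x^{\deg h}h(1/x)$. The Gray map $\phi_\vartheta:R^n\to F_p^{2n}$ sends $(c_0,\dots,c_{n-1})$ with $c_i=r_i+vq_i$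 to $(\lambda(\lambda+\mu)q_0,\dots,\lambda(\lambda+\mu)q_{n-1},-\mu r_0-(\lambda+\mu)q_0,\dots,-\mu r_{n-1}-(\lambda+\mu)q_{n-1})$; equivalently, in polynomial form, $r(x)+vq(x)\mapsto\lambda(\lambda+\mu)q(x)+x^n[-\mu r(x)-(\lambda+\mu)q(x)]\in F_p[x]/\langle x^{2n}-1\rangle$. For a monic divisor $g$ of $x^{2n}-1$, $[g(x)]$ denotes the cyclic code (ideal of $F_p[x]/\langle x^{2n}-1\rangle$) generated by $g$. *)

From HB Require Import structures.
From mathcomp Require Import all_boot all_order all_algebra.
Set Implicit Arguments. Unset Strict Implicit. Unset Printing Implicit Defensive.
Import Order.TTheory GRing.Theory Num.Theory.
Local Open Scope ring_scope.

(* The ring R = F_p + v F_p with v^2 = v.                                  *)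
(* We realize it concretely as the (commutative) product ring F_p x F_p,   *)
(* with F_p embedded diagonally (c |-> (c,c)) and v := (0,1).  Then         *)
(* v^2 = v, and every element a = (a1,a2) is uniquely r + v q with          *)
(* r = a1, q = a2 - a1 (see [Rdecomp] below).                               *)
Definition Rp (p : nat) : Type := ('F_p * 'F_p)%type.
Definition vR (p : nat) : Rp p := (0, 1).
Definition embF (p : nat) (c : 'F_p) : Rp p := (c, c).
Definition rpart (p : nat) (a : Rp p) : 'F_p := a.1.
Definition qpart (p : nat) (a : Rp p) : 'F_p := a.2 - a.1.

Lemma vR_idem (p : nat) : vR p * vR p = vR p.
Proof. by rewrite /vR; congr pair; rewrite ?mulr0 ?mulr1. Qed.

Lemma Rdecomp (p : nat) (a : Rp p) :
  a = embF (rpart a) + vR p * embF (qpart a).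
Proof.
case: a => a1 a2; rewrite /embF /vR /rpart /qpart /=.
congr pair => /=; rewrite ?mul0r ?mul1r ?addr0 //.
by rewrite addrC subrK.
Qed.

Definition thetaR (p : nat) (lam mu : 'F_p) : Rp p := embF lam + vR p * embF mu.

(* The ideal <v g1(x), (1-v) g2(x)> of R[x]/<x^n - theta>, each class being
   represented by its reduced representative (degree < n), i.e. a vector of
   R^n via (c_i) <-> sum c_i x^i. *)
Definition constaIdeal (p n : nat) (lam mu : 'F_p) (g1 g2 : {poly 'F_p})
  : {poly Rp p} -> Prop :=
  fun c => exists a b : {poly Rp p},
    c = Pdiv.Ring.rmodp (a * ((vR p)%:P * map_poly (@embF p) g1)
               + b * ((1 - vR p)%:P * map_poly (@embF p) g2))
              ('X^n - (thetaR lam mu)%:P).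

Definition dualR (p n : nat) (C : {poly Rp p} -> Prop) : {poly Rp p} -> Prop :=
  fun d => (size d <= n)%N /\
    forall c, C c -> \sum_(i < n) c`_i * d`_i = 0.

Definition dualF (p m : nat) (S : {poly 'F_p} -> Prop) : {poly 'F_p} -> Prop :=
  fun y => (size y <= m)%N /\
    forall c, S c -> \sum_(i < m) c`_i * y`_i = 0.

Definition grayPhi (p n : nat) (lam mu : 'F_p) (c : {poly Rp p}) : {poly 'F_p} :=
  let r := map_poly (@rpart p) c in
  let q := map_poly (@qpart p) c in
  (lam * (lam + mu)) *: q + 'X^n * (- (mu *: r) - (lam + mu) *: q).

Definition grayImage (p n : nat) (lam mu : 'F_p) (S : {poly Rp p} -> Prop)
  : {poly 'F_p} -> Prop :=
  fun y => exists c, S c /\ y = grayPhi n lam mu c.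

(* The cyclic code [g(x)] of length m: ideal of F_p[x]/<x^m - 1> generated by
   g, classes represented by reduced representatives. *)
Definition cyclicCode (p m : nat) (g : {poly 'F_p}) : {poly 'F_p} -> Prop :=
  fun y => exists a : {poly 'F_p}, y = (a * g) %% ('X^m - 1).

(* Reciprocal polynomial x^{deg h} h(1/x), and h^* = (1/h(0)) x^{deg h} h(1/x). *)
Definition recip (p : nat) (h : {poly 'F_p}) : {poly 'F_p} :=
  \poly_(i < size h) h`_((size h).-1 - i).
Definition hstar (p : nat) (h : {poly 'F_p}) : {poly 'F_p} :=
  (h`_0)^-1 *: recip h.

From HB Require Import structures.
From mathcomp Require Import all_boot all_order all_algebra.
From mathcomp Require Import zify ring.
Set Implicit Arguments. Unset Strict Implicit. Unset Printing Implicit Defensive.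
Import Order.TTheory GRing.Theory Num.Theory.
Local Open Scope ring_scope.

(* Through the idempotents 1 - v and v, R = F_p x F_p and theta = (lam, -lam) with
   lam = +-1, so C = C1 x C2 with C1 = <g_v> lam-constacyclic and C2 = <g_{1-v}>
   (-lam)-constacyclic over F_p, and C^perp = C1^perp x C2^perp.  If g h = x^n - s,
   the dual of <g> is generated by the reciprocal of h, a divisor of x^n - 1/s.
   In these coordinates the Gray map is (c1, c2) |-> (c1 - c2) + lam x^n (c1 + c2),
   which is 2 c1 modulo x^n - lam and -2 c2 modulo x^n + lam: by the Chinese
   remainder theorem for x^2n - 1 = (x^n - lam)(x^n + lam) it is a bijection onto
   F_p^2n, and it doubles inner products. *)

Section PolyReverse.
Variable R : comNzRingType.
Implicit Types a b q : {poly R}.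

Definition rev_poly (N : nat) q : {poly R} := \poly_(i < N) q`_(N.-1 - i).

Lemma coef_rev_poly N q i :
  (rev_poly N q)`_i = if (i < N)%N then q`_(N.-1 - i) else 0.
Proof. exact: coef_poly. Qed.

Lemma size_rev_poly N q : (size (rev_poly N q) <= N)%N.
Proof. exact: size_poly. Qed.

Lemma rev_polyD N a b : rev_poly N (a + b) = rev_poly N a + rev_poly N b.
Proof.
by apply/polyP=> i; rewrite coefD !coef_rev_poly coefD; case: ifP; rewrite ?addr0.
Qed.

Lemma rev_polyZ N c a : rev_poly N (c *: a) = c *: rev_poly N a.
Proof.
by apply/polyP=> i; rewrite coefZ !coef_rev_poly coefZ; case: ifP; rewrite ?mulr0.
Qed.

Lemma rev_poly0 N : rev_poly N 0 = 0.
Proof. by apply/polyP=> i; rewrite coef_rev_poly !coef0 if_same. Qed.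

Lemma rev_poly_sum N (I : Type) (r : seq I) (P : pred I) (G : I -> {poly R}) :
  rev_poly N (\sum_(i <- r | P i) G i) = \sum_(i <- r | P i) rev_poly N (G i).
Proof. exact: (big_morph _ (rev_polyD N) (rev_poly0 N)). Qed.

Lemma rev_polyK N q : (size q <= N)%N -> rev_poly N (rev_poly N q) = q.
Proof.
move=> sq; apply/polyP=> i; rewrite !coef_rev_poly.
case: ltnP => iN; last by rewrite nth_default // (leq_trans sq).
by rewrite ifT; [congr (q`_ _) | ]; lia.
Qed.

Lemma rev_polyXn N k : rev_poly N 'X^k = if (k < N)%N then 'X^(N.-1 - k) else 0.
Proof.
apply/polyP=> i; rewrite coef_rev_poly !coefXn.
case: (ltnP k N) => kN; case: (ltnP i N) => iN; rewrite ?coefXn ?coef0 //.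
- by congr (_%:R); apply/eqP/eqP; lia.
- by case: eqP => //; lia.
- by case: eqP => //; lia.
Qed.

Lemma rev_polyM A B a b : (size a <= A)%N -> (size b <= B)%N ->
  rev_poly (A + B).-1 (a * b) = rev_poly A a * rev_poly B b.
Proof.
move=> sa sb; rewrite -(take_poly_id sa) -(take_poly_id sb) /take_poly !poly_def.
rewrite big_distrl !rev_poly_sum big_distrl; apply: eq_bigr => i _.
rewrite big_distrr !rev_poly_sum big_distrr; apply: eq_bigr => j _ /=.
have [iA jB] := (ltn_ord i, ltn_ord j).
rewrite -!scalerAl -!scalerAr !scalerA -exprD !rev_polyZ !rev_polyXn !ifT //; last by lia.
by rewrite -scalerAl -scalerAr scalerA -exprD; congr (_ *: 'X^_); lia.
Qed.

End PolyReverse.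

Section ReverseDivisibility.
Variable F : fieldType.
Implicit Types d h w : {poly F}.

Lemma size_rev_poly_size h : h`_0 != 0 -> size (rev_poly (size h) h) = size h.
Proof.
move=> h0; apply/eqP; rewrite eqn_leq size_rev_poly /=.
case sh: (size h) => [|k] //.
have hk : (rev_poly k.+1 h)`_k = h`_0 by rewrite coef_rev_poly ltnSn subnn.
rewrite leqNgt; apply/negP; rewrite ltnS => /(nth_default 0).
by rewrite -/(nth 0 _ k) hk => /eqP; apply/negP.
Qed.

Lemma size_cofactor_leq w h N : h != 0 -> (size (w * h)%R <= N)%N ->
  (size w <= N.+1 - size h)%N.
Proof.
move=> hn0; have [->|wn0] := eqVneq w 0; first by rewrite size_poly0.
rewrite size_mul //; have : (0 < size h)%N by rewrite size_poly_gt0.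
by move: (size w) (size h) => x y; lia.
Qed.

Lemma dvdp_rev_poly n h d : h`_0 != 0 -> (size h <= n.+1)%N -> (size d <= n)%N ->
  (h %| rev_poly n d) = (rev_poly (size h) h %| d).
Proof.
move=> h0 shn sd.
have hn0 : h != 0 by apply: contraNneq h0 => ->; rewrite coef0.
have sh0 : (0 < size h)%N by rewrite size_poly_gt0.
have En : n = ((n.+1 - size h) + size h).-1 by lia.
apply/idP/idP => /dvdpP [w Hw].
  have sw : (size w <= n.+1 - size h)%N.
    by apply: size_cofactor_leq hn0 _; rewrite -Hw size_rev_poly.
  by rewrite -(rev_polyK sd) Hw En rev_polyM // dvdp_mulIr.
have sr := size_rev_poly_size h0.
have rn0 : rev_poly (size h) h != 0 by rewrite -size_poly_gt0 sr.
have sw : (size w <= n.+1 - size h)%N.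
  by rewrite -sr; apply: size_cofactor_leq rn0 _; rewrite -Hw.
by rewrite Hw En rev_polyM ?size_rev_poly // (rev_polyK (leqnn _)) dvdp_mulIr.
Qed.

End ReverseDivisibility.

Definition dotp (R : nzRingType) (m : nat) (c d : {poly R}) : R :=
  \sum_(i < m) c`_i * d`_i.

Lemma dotp0l (R : nzRingType) (m : nat) (d : {poly R}) : dotp m 0 d = 0.
Proof. by rewrite /dotp big1 // => i _; rewrite coef0 mul0r. Qed.

Definition dual_code (F : fieldType) (m : nat) (S : {poly F} -> Prop) :
  {poly F} -> Prop :=
  fun y => (size y <= m)%N /\ forall c, S c -> dotp m c y = 0.

Lemma dual_code_ext (F : fieldType) (m : nat) (S T : {poly F} -> Prop) y :
  (forall c, S c <-> T c) -> dual_code m S y <-> dual_code m T y.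
Proof. by move=> ST; split=> -[sy H]; split=> // c /ST; apply: H. Qed.

Definition constaCode (F : fieldType) (n : nat) (s : F) (g : {poly F}) :
  {poly F} -> Prop :=
  fun c => exists a, c = (a * g) %% ('X^n - s%:P).

Section ConstacyclicDual.
Variable F : fieldType.
Variable n : nat.
Hypothesis n_gt0 : (0 < n)%N.
Variable s : F.
Implicit Types a c d g h y P : {poly F}.
Local Notation f := ('X^n - s%:P).

Lemma size_modp_XnsubC y : (size (y %% f)%R <= n)%N.
Proof. by rewrite -ltnS -(size_XnsubC s n_gt0) ltn_modp -size_poly_eq0 size_XnsubC. Qed.

Lemma modp_XnsubC_small P : (size P <= n.*2)%N ->
  P %% f = take_poly n P + s *: drop_poly n P.
Proof.
move=> sP; apply/esym/(@modpP _ _ (drop_poly n P)); last first.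
  rewrite size_XnsubC // ltnS (leq_trans (size_polyD _ _)) // geq_max size_take_poly.
  by rewrite (leq_trans (size_scale_leq _ _)) // size_drop_poly; lia.
rewrite -{1}(poly_take_drop n P) mulrBr [drop_poly n P * s%:P]mulrC mul_polyC.
by move: (take_poly _ _) (drop_poly n P * _) (s *: _) => x y z; ring.
Qed.

Lemma constaCode0 g : constaCode n s g 0.
Proof. by exists 0; rewrite mul0r mod0p. Qed.

Lemma size_constaCode g c : constaCode n s g c -> (size c <= n)%N.
Proof. by case=> a ->; apply: size_modp_XnsubC. Qed.

Lemma constaCodeZ k g y : k != 0 -> constaCode n s (k *: g) y <-> constaCode n s g y.
Proof.
move=> k0; split=> -[a ->]; first by exists (k *: a); rewrite -scalerAr scalerAl.
by exists (k^-1 *: a); rewrite -scalerAl -scalerAr scalerA mulVf // scale1r.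
Qed.

Lemma constaCode_dvdpP g y : g %| f ->
  constaCode n s g y <-> (size y <= n)%N /\ g %| y.
Proof.
move=> gf; split=> [[a ->] | [sy /dvdpP [a ay]]].
  by rewrite size_modp_XnsubC -(dvdp_mod _ gf) dvdp_mull.
by exists a; rewrite -ay modp_small // size_XnsubC.
Qed.

Lemma coef_modp_XnsubC_last P : (size P <= n.*2)%N ->
  (P %% f)`_n.-1 = P`_n.-1 + s * P`_(n.*2.-1).
Proof.
move=> sP; rewrite modp_XnsubC_small // coefD coefZ coef_take_poly coef_drop_poly.
by rewrite ifT; [congr (_ + s * P`_ _) | ]; lia.
Qed.

Lemma dotp_rev_poly c d : (size c <= n)%N -> dotp n c d = (c * rev_poly n d)`_n.-1.
Proof.
move=> sc; rewrite coefM /dotp prednK //; apply: eq_bigr => i _.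
have := ltn_ord i; rewrite coef_rev_poly ifT; last by lia.
by move=> ?; congr (_ * d`_ _); lia.
Qed.

Lemma dotp_modp_XnsubC a d : (size d <= n)%N ->
  dotp n (a %% f) d = ((a * rev_poly n d) %% f)`_n.-1.
Proof.
move=> sd; rewrite mulrC -modp_mul mulrC coef_modp_XnsubC_last; last first.
  apply: (leq_trans (size_polyMleq _ _)); apply: (leq_trans (leq_pred _)).
  by rewrite -addnn leq_add ?size_rev_poly ?size_modp_XnsubC.
rewrite dotp_rev_poly ?size_modp_XnsubC // [X in _ + s * X]nth_default ?mulr0 ?addr0 //.
apply: (leq_trans (size_polyMleq _ _)).
by rewrite -!subn1 leq_sub2r // -addnn leq_add ?size_rev_poly ?size_modp_XnsubC.
Qed.

Lemma orthogonal_multiples_dvdp g d : (size d <= n)%N ->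
  (forall a, dotp n ((a * g) %% f) d = 0) <-> (f %| g * rev_poly n d).
Proof.
move=> sd; split=> [H | H a]; last first.
  by rewrite dotp_modp_XnsubC // -mulrA modp_eq0 ?coef0 // dvdp_mull.
rewrite /dvdp; apply/eqP; set E := (g * rev_poly n d) %% f.
have sE : (size E <= n)%N by apply: size_modp_XnsubC.
apply/polyP=> m; rewrite coef0.
case: (ltnP m n) => mn; last by rewrite nth_default // (leq_trans sE).
(* test against a = X^(n-1-m), which moves coefficient m of E to position n-1 *)
have := H ('X^(n.-1 - m)); rewrite dotp_modp_XnsubC // -mulrA -modp_mul -/E.
rewrite coef_modp_XnsubC_last; last first.
  apply: (leq_trans (size_polyMleq _ _)); rewrite size_polyXn.
  by move: sE; move: (size E) => e; lia.
rewrite !coefXnM ifF; last by lia.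
rewrite ifF; last by lia.
rewrite [X in _ + s * X]nth_default ?mulr0 ?addr0; last by apply: leq_trans sE _; lia.
by have -> : (n.-1 - (n.-1 - m))%N = m by lia.
Qed.

Lemma XnsubC_neq0 : f != 0.
Proof. by rewrite -size_poly_eq0 size_XnsubC. Qed.

Lemma XnsubC_factors_neq0 g h : g * h = f -> g != 0 /\ h != 0.
Proof. by move=> ghf; apply/andP; rewrite -negb_or -mulf_eq0 ghf XnsubC_neq0. Qed.

Lemma coef0_XnsubC_cofactor g h : s != 0 -> g * h = f -> h`_0 != 0.
Proof.
move=> s0 /(congr1 (fun q : {poly F} => q`_0)); rewrite /= coef0M coefB coefXn coefC.
have -> : (0 == n)%N = false by lia.
rewrite sub0r => E; apply/eqP => h00; move: E; rewrite h00 mulr0 => /eqP.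
by rewrite eq_sym oppr_eq0 (negbTE s0).
Qed.

Lemma size_XnsubC_cofactor g h : g * h = f -> (size h <= n.+1)%N.
Proof.
move=> ghf; have [gn0 hn0] := XnsubC_factors_neq0 ghf.
rewrite -(size_XnsubC s n_gt0) -ghf size_mul //.
have : (0 < size g)%N by rewrite size_poly_gt0.
by move: (size g) (size h) => x y; lia.
Qed.

Lemma dual_constaCodeP g h d : s != 0 -> g * h = f ->
  dual_code n (constaCode n s g) d <-> (size d <= n)%N /\ rev_poly (size h) h %| d.
Proof.
move=> s0 ghf; have [gn0 _] := XnsubC_factors_neq0 ghf.
have h0 := coef0_XnsubC_cofactor s0 ghf.
have shn := size_XnsubC_cofactor ghf.
split=> [[sd H] | [sd H]]; split=> //.
  rewrite -(@dvdp_rev_poly _ n) // -(dvdp_mul2l _ _ gn0) ghf.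
  by apply/orthogonal_multiples_dvdp => // a; apply: H; exists a.
move=> _ [a ->]; move: a; apply/orthogonal_multiples_dvdp => //.
by rewrite -ghf dvdp_mul2l // dvdp_rev_poly.
Qed.

Lemma rev_poly_XnsubC : s != 0 ->
  rev_poly n.+1 f = - s *: ('X^n - s^-1%:P).
Proof.
move=> s0; have -> : f = 'X^n + (- s) *: 'X^0 by rewrite expr0 scaleNr alg_polyC.
rewrite rev_polyD rev_polyZ !rev_polyXn ltnSn ltn0Sn subnn subn0 expr0 /=.
rewrite scalerBr -[_ *: s^-1%:P]mul_polyC -polyCM mulNr mulfV //.
by rewrite polyCN opprK addrC.
Qed.

Lemma rev_cofactor_dvdp_XnsubC g h : s != 0 -> g * h = f ->
  rev_poly (size h) h %| 'X^n - s^-1%:P.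
Proof.
move=> s0 ghf; have [gn0 hn0] := XnsubC_factors_neq0 ghf.
rewrite -(@dvdpZr _ (- s)) ?oppr_eq0 // -rev_poly_XnsubC //.
have -> : n.+1 = (size h + size g).-1 by rewrite -size_mul // mulrC ghf size_XnsubC.
by rewrite -ghf mulrC rev_polyM // dvdp_mulIl.
Qed.

End ConstacyclicDual.

Section GrayMap.
Variable F : fieldType.
Variable n : nat.
Hypothesis n_gt0 : (0 < n)%N.
Variable s : F.
Hypothesis s2 : s * s = 1.
Hypothesis two_neq0 : (2%:R : F) != 0.
Implicit Types a b y z : {poly F}.
Local Notation f1 := ('X^n - s%:P).
Local Notation f2 := ('X^n - (- s)%:P).

Definition gray_map (c1 c2 : {poly F}) : {poly F} := (c1 - c2) + s *: ('X^n * (c1 + c2)).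

Definition gray_inv_l y : {poly F} := (2%:R)^-1 *: (y %% f1).
Definition gray_inv_r y : {poly F} := - ((2%:R)^-1 *: (y %% f2)).

Lemma sqr1_neq0 : s != 0.
Proof. by apply: contra_eq_neq s2 => ->; rewrite mulr0 eq_sym oner_neq0. Qed.

Lemma sqr1_invE : s^-1 = s.
Proof. by apply: (mulfI sqr1_neq0); rewrite mulfV ?sqr1_neq0. Qed.

Lemma XnsubC_mul_XnaddC : f1 * f2 = 'X^(n.*2) - 1.
Proof.
rewrite polyCN -addnn exprD -[1]polyC1 -s2 polyCM.
by move: ('X^n) (s%:P) => x S; ring.
Qed.

Lemma coprimep_XnsubC_XnaddC : coprimep f1 f2.
Proof.
have -> : f2 = 1 * f1 + (s *+ 2)%:P.
  by rewrite mul1r polyCN polyCMn mulr2n; move: ('X^n) (s%:P) => x y; ring.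
rewrite coprimep_addl_mul -[(s *+ 2)%:P]mulr1 mul_polyC coprimepZr ?coprimep1 //.
by rewrite -mulr_natr mulf_neq0 ?sqr1_neq0.
Qed.

Lemma size_gray_map (c1 c2 : {poly F}) : (size c1 <= n)%N -> (size c2 <= n)%N ->
  (size (gray_map c1 c2) <= n.*2)%N.
Proof.
move=> sc1 sc2; have s12 : (size (c1 + c2)%R <= n)%N.
  by rewrite (leq_trans (size_polyD _ _)) // geq_max sc1.
rewrite (leq_trans (size_polyD _ _)) // geq_max; apply/andP; split.
  rewrite (leq_trans (size_polyD _ _)) // geq_max size_polyN.
  by apply/andP; split; [apply: leq_trans sc1 _ | apply: leq_trans sc2 _]; lia.
rewrite (leq_trans (size_scale_leq _ _)) // (leq_trans (size_polyMleq _ _)) //.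
by rewrite size_polyXn; move: s12; move: (size _) => x; lia.
Qed.

Lemma gray_map_modp_l (c1 c2 : {poly F}) : (size c1 <= n)%N -> (size c2 <= n)%N ->
  gray_map c1 c2 %% f1 = c1 *+ 2.
Proof.
move=> sc1 sc2; apply/esym/(@modpP _ _ (s *: (c1 + c2))); last first.
  by rewrite size_XnsubC // ltnS mulr2n (leq_trans (size_polyD _ _)) // geq_max sc1.
rewrite /gray_map -!mul_polyC; set S := s%:P.
have SS : S * S = 1 by rewrite -polyCM s2.
apply/eqP; rewrite -subr_eq0; apply/eqP.
transitivity ((S * S - 1) * (c1 + c2)); first by ring.
by rewrite SS subrr mul0r.
Qed.

Lemma gray_map_modp_r (c1 c2 : {poly F}) : (size c1 <= n)%N -> (size c2 <= n)%N ->
  gray_map c1 c2 %% f2 = - c2 *+ 2.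
Proof.
move=> sc1 sc2; apply/esym/(@modpP _ _ (s *: (c1 + c2))); last first.
  by rewrite size_XnsubC // ltnS mulr2n (leq_trans (size_polyD _ _)) // size_polyN geq_max sc2.
rewrite /gray_map -!mul_polyC polyCN; set S := s%:P.
have SS : S * S = 1 by rewrite -polyCM s2.
apply/eqP; rewrite -subr_eq0; apply/eqP.
transitivity ((1 - S * S) * (c1 + c2)); first by ring.
by rewrite SS subrr mul0r.
Qed.

Lemma eq_modp_XnsubC_XnaddC y z : (size y <= n.*2)%N -> (size z <= n.*2)%N ->
  y %% f1 = z %% f1 -> y %% f2 = z %% f2 -> y = z.
Proof.
move=> sy sz e1 e2; apply/eqP; rewrite -subr_eq0; apply/eqP.
have d1 : f1 %| y - z by rewrite /dvdp modpD modpN e1 subrr.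
have d2 : f2 %| y - z by rewrite /dvdp modpD modpN e2 subrr.
have d12 : f1 * f2 %| y - z by rewrite Gauss_dvdp ?coprimep_XnsubC_XnaddC ?d1.
apply/eqP; apply: contraT => nz; have := dvdp_leq nz d12.
rewrite XnsubC_mul_XnaddC -polyC1 size_XnsubC; last by lia.
by rewrite ltnNge (leq_trans (size_polyD _ _)) // geq_max sy size_polyN sz.
Qed.

Lemma size_gray_inv_l y : (size (gray_inv_l y) <= n)%N.
Proof. by rewrite (leq_trans (size_scale_leq _ _)) // size_modp_XnsubC. Qed.

Lemma size_gray_inv_r y : (size (gray_inv_r y) <= n)%N.
Proof. by rewrite size_polyN (leq_trans (size_scale_leq _ _)) // size_modp_XnsubC. Qed.

Lemma half_mul2 : (2%:R : F)^-1 *+ 2 = 1.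
Proof. by rewrite -(mulr_natr ((2%:R : F)^-1) 2) mulVf. Qed.

Lemma gray_inv_l_gray_map (c1 c2 : {poly F}) : (size c1 <= n)%N -> (size c2 <= n)%N ->
  gray_inv_l (gray_map c1 c2) = c1.
Proof.
by move=> sc1 sc2; rewrite /gray_inv_l gray_map_modp_l // -scalerMnr scalerMnl half_mul2 scale1r.
Qed.

Lemma gray_inv_r_gray_map (c1 c2 : {poly F}) : (size c1 <= n)%N -> (size c2 <= n)%N ->
  gray_inv_r (gray_map c1 c2) = c2.
Proof.
move=> sc1 sc2; rewrite /gray_inv_r gray_map_modp_r //.
by rewrite -scalerMnr scalerMnl half_mul2 scale1r opprK.
Qed.

Lemma gray_map_inv y : (size y <= n.*2)%N -> gray_map (gray_inv_l y) (gray_inv_r y) = y.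
Proof.
move=> sy; have [sl sr] := (size_gray_inv_l y, size_gray_inv_r y).
apply: eq_modp_XnsubC_XnaddC; rewrite ?size_gray_map ?gray_map_modp_l ?gray_map_modp_r //.
  by rewrite /gray_inv_l scalerMnl half_mul2 scale1r.
by rewrite /gray_inv_r opprK scalerMnl half_mul2 scale1r.
Qed.

Lemma dotp_gray_map (c1 c2 d1 d2 : {poly F}) :
  (size c1 <= n)%N -> (size c2 <= n)%N -> (size d1 <= n)%N -> (size d2 <= n)%N ->
  dotp n.*2 (gray_map c1 c2) (gray_map d1 d2) = 2%:R * (dotp n c1 d1 + dotp n c2 d2).
Proof.
move=> sc1 sc2 sd1 sd2; rewrite /dotp -addnn big_split_ord /= -!big_split mulr_sumr.
apply: eq_bigr => i _.
have coef_gray_map (a b : {poly F}) k :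
    (gray_map a b)`_k = (a - b)`_k + s * (if (k < n)%N then 0 else (a + b)`_(k - n)).
  by rewrite /gray_map coefD coefZ coefXnM.
rewrite !coef_gray_map /= ltn_ord mulr0 !addr0 ltnNge leq_addr /= addKn.
have hi (q : {poly F}) : (size q <= n)%N -> q`_(n + i) = 0.
  by move=> sq; rewrite nth_default // (leq_trans sq) // leq_addr.
rewrite !(coefD, coefN) !hi // !oppr0 !addr0 !add0r.
move: (c1`_i) (c2`_i) (d1`_i) (d2`_i) => a b c d.
apply/eqP; rewrite -subr_eq0; apply/eqP.
transitivity ((s * s - 1) * (a + b) * (c + d)); first by ring.
by rewrite s2 subrr !mul0r.
Qed.

Definition gray_image (A B : {poly F} -> Prop) : {poly F} -> Prop :=
  fun z => exists c1 c2, [/\ A c1, B c2 & z = gray_map c1 c2].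

Section GrayImage.
Variables A B : {poly F} -> Prop.
Hypothesis sizeA : forall c, A c -> (size c <= n)%N.
Hypothesis sizeB : forall c, B c -> (size c <= n)%N.

Lemma gray_imageP y :
  gray_image A B y <-> [/\ (size y <= n.*2)%N, A (gray_inv_l y) & B (gray_inv_r y)].
Proof.
split=> [[c1 [c2 [a b ->]]] | [sy a b]].
  have [sc1 sc2] := (sizeA a, sizeB b).
  by rewrite size_gray_map ?gray_inv_l_gray_map ?gray_inv_r_gray_map.
by exists (gray_inv_l y), (gray_inv_r y); rewrite gray_map_inv.
Qed.

Lemma dual_gray_imageP y : A 0 -> B 0 ->
  dual_code n.*2 (gray_image A B) y <->
  [/\ (size y <= n.*2)%N, dual_code n A (gray_inv_l y) & dual_code n B (gray_inv_r y)].
Proof.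
move=> A0 B0.
have dotpE c1 c2 : (size y <= n.*2)%N -> A c1 -> B c2 -> dotp n.*2 (gray_map c1 c2) y =
    2%:R * (dotp n c1 (gray_inv_l y) + dotp n c2 (gray_inv_r y)).
  move=> sy a b; rewrite -{1}(gray_map_inv sy).
  by rewrite dotp_gray_map ?(sizeA a) ?(sizeB b) ?size_gray_inv_l ?size_gray_inv_r.
split=> [[sy H] | [sy [_ H1] [_ H2]]].
  have H0 c1 c2 : A c1 -> B c2 -> dotp n c1 (gray_inv_l y) + dotp n c2 (gray_inv_r y) = 0.
    move=> a b; apply/eqP; rewrite -(mulrI_eq0 _ (lregP two_neq0)) -dotpE //.
    by rewrite H //; exists c1, c2.
  split=> //.
    split=> [|c a]; first exact: size_gray_inv_l.
    by have := H0 _ _ a B0; rewrite dotp0l addr0.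
  split=> [|c b]; first exact: size_gray_inv_r.
  by have := H0 _ _ A0 b; rewrite dotp0l add0r.
split=> // _ [c1 [c2 [a b ->]]].
by rewrite dotpE // H1 // H2 // addr0 mulr0.
Qed.

End GrayImage.

Lemma gray_image_dual (A B : {poly F} -> Prop) y :
  (forall c, A c -> (size c <= n)%N) -> (forall c, B c -> (size c <= n)%N) ->
  A 0 -> B 0 ->
  gray_image (dual_code n A) (dual_code n B) y <-> dual_code n.*2 (gray_image A B) y.
Proof.
move=> sizeA sizeB A0 B0; rewrite dual_gray_imageP //.
by apply: gray_imageP => c [].
Qed.

Lemma dvdp_gray_inv a b y : a %| f1 -> b %| f2 ->
  (a %| gray_inv_l y) && (b %| gray_inv_r y) = (a * b %| y).
Proof.
move=> af1 bf2; have i0 : (2%:R : F)^-1 != 0 by rewrite invr_eq0.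
have cab : coprimep a b.
  exact: coprimep_dvdl bf2 (coprimep_dvdr af1 coprimep_XnsubC_XnaddC).
by rewrite Gauss_dvdp // /gray_inv_l /gray_inv_r dvdpNr !dvdpZr // -!dvdp_mod.
Qed.

Lemma gray_image_dual_constaCode g1 g2 h1 h2 y : g1 * h1 = f2 -> g2 * h2 = f1 ->
  gray_image (dual_code n (constaCode n s g2)) (dual_code n (constaCode n (- s) g1)) y
  <-> constaCode n.*2 1 (rev_poly (size h2) h2 * rev_poly (size h1) h1) y.
Proof.
move=> gh1 gh2; have [s0 sN0] : s != 0 /\ - s != 0 by rewrite oppr_eq0 sqr1_neq0.
have R2f1 : rev_poly (size h2) h2 %| f1.
  by rewrite -[X in X%:P]sqr1_invE; apply: rev_cofactor_dvdp_XnsubC gh2.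
have R1f2 : rev_poly (size h1) h1 %| f2.
  have sNV : (- s)^-1 = - s by rewrite invrN sqr1_invE.
  by rewrite -[X in X%:P]sNV; apply: rev_cofactor_dvdp_XnsubC gh1.
rewrite constaCode_dvdpP ?double_gt0 ?polyC1 -?XnsubC_mul_XnaddC ?dvdp_mul //.
have dualA := dual_constaCodeP n_gt0 (gray_inv_l y) s0 gh2.
have dualB := dual_constaCodeP n_gt0 (gray_inv_r y) sN0 gh1.
rewrite gray_imageP => [|c []|c []] //; rewrite -dvdp_gray_inv //.
split=> [[sy /dualA [_ ->] /dualB [_ ->]] | [sy /andP [dl dr]]] //.
by split=> //; [apply/dualA | apply/dualB]; rewrite ?size_gray_inv_l ?size_gray_inv_r.
Qed.

End GrayMap.

Section ProductRing.
Variable p : nat.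
Local Notation K := 'F_p.
Local Notation RR := (Rp p).
Implicit Types a b : {poly K}.
Implicit Types c d : {poly RR}.

(* The components of [c] along the idempotents [1 - v] and [v]: for [c = r + v q]
   they are [r] and [r + q]; [theta] has components [lam] and [lam + mu]. *)
Definition pfst c : {poly K} := map_poly (@fst K K) c.
Definition psnd c : {poly K} := map_poly (@snd K K) c.

Definition poly_pair a b : {poly RR} :=
  \poly_(i < maxn (size a) (size b)) ((a`_i, b`_i) : RR).

Lemma coef_pfst c i : (pfst c)`_i = (c`_i).1.
Proof. exact: coef_map. Qed.

Lemma coef_psnd c i : (psnd c)`_i = (c`_i).2.
Proof. exact: coef_map. Qed.

Lemma pfst_pair a b : pfst (poly_pair a b) = a.
Proof.
apply/polyP=> i; rewrite coef_pfst coef_poly; case: ltnP => //=.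
by rewrite geq_max => /andP [sa _]; rewrite nth_default.
Qed.

Lemma psnd_pair a b : psnd (poly_pair a b) = b.
Proof.
apply/polyP=> i; rewrite coef_psnd coef_poly; case: ltnP => //=.
by rewrite geq_max => /andP [_ sb]; rewrite nth_default.
Qed.

Lemma poly_pair_eq c d : pfst c = pfst d -> psnd c = psnd d -> c = d.
Proof.
move=> /polyP e1 /polyP e2; apply/polyP=> i; move: (e1 i) (e2 i).
by rewrite !coef_pfst !coef_psnd; case: (c`_i) (d`_i) => [? ?] [? ?] /= -> ->.
Qed.

Lemma poly_pairK c : poly_pair (pfst c) (psnd c) = c.
Proof. by apply: poly_pair_eq; rewrite ?pfst_pair ?psnd_pair. Qed.

Lemma size_poly_pair a b m : (size a <= m)%N -> (size b <= m)%N ->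
  (size (poly_pair a b) <= m)%N.
Proof. by move=> sa sb; rewrite (leq_trans (size_poly _ _)) // geq_max sa. Qed.

Lemma pfst_embF a : pfst (map_poly (@embF p) a) = a.
Proof. by apply/polyP=> i; rewrite coef_pfst coef_map_id0. Qed.

Lemma psnd_embF a : psnd (map_poly (@embF p) a) = a.
Proof. by apply/polyP=> i; rewrite coef_psnd coef_map_id0. Qed.

Lemma dotp_fst m c d : (dotp m c d).1 = dotp m (pfst c) (pfst d).
Proof.
rewrite /dotp (big_morph (@fst K K) (fun x y => erefl) (erefl : (0 : RR).1 = 0)).
by apply: eq_bigr => i _; rewrite !coef_pfst.
Qed.

Lemma dotp_snd m c d : (dotp m c d).2 = dotp m (psnd c) (psnd d).
Proof.
rewrite /dotp (big_morph (@snd K K) (fun x y => erefl) (erefl : (0 : RR).2 = 0)).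
by apply: eq_bigr => i _; rewrite !coef_psnd.
Qed.

Lemma map_rmodp (phi : {rmorphism RR -> K}) (P Q : {poly RR}) : Q \is monic ->
  map_poly phi (Pdiv.Ring.rmodp P Q) = map_poly phi P %% map_poly phi Q.
Proof.
move=> mQ; have e := Pdiv.RingMonic.rdivp_eq mQ P.
apply/(modpP (q := map_poly phi (Pdiv.Ring.rdivp P Q))).
  by rewrite {1}e rmorphD rmorphM.
rewrite [size (map_poly phi Q)]size_map_poly_id0; last by rewrite (eqP mQ) rmorph1 oner_neq0.
apply: leq_ltn_trans (size_poly _ _) _.
by apply: Pdiv.Ring.ltn_rmodpN0; apply: monic_neq0.
Qed.

End ProductRing.

Section ConstacyclicIdeal.
Variable p : nat.
Local Notation K := 'F_p.
Local Notation RR := (Rp p).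
Variable n : nat.
Hypothesis n_gt0 : (0 < n)%N.
Variables (lam mu : K) (g1 g2 : {poly K}).

Lemma constaIdeal_gen_components (a b : {poly RR}) :
  let c := Pdiv.Ring.rmodp (a * ((vR p)%:P * map_poly (@embF p) g1)
             + b * ((1 - vR p)%:P * map_poly (@embF p) g2))
             ('X^n - (thetaR lam mu)%:P) in
  pfst c = (pfst b * g2) %% ('X^n - lam%:P) /\
  psnd c = (psnd a * g1) %% ('X^n - (lam + mu)%:P).
Proof.
have mF : 'X^n - (thetaR lam mu)%:P \is monic by apply: monicXnsubC.
split.
  rewrite /pfst map_rmodp // !rmorphD !rmorphM ?rmorphN /= !map_polyC /=.
  rewrite map_polyXn -!/(pfst _) !pfst_embF /thetaR /embF /vR /=.
  rewrite -polyCB -polyCM -polyCD /pfst !map_polyC /=.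
  by rewrite ?(mul0r, addr0, subr0, polyC0, polyC1, mulr0, add0r, mul1r).
rewrite /psnd map_rmodp // !rmorphD !rmorphM ?rmorphN /= !map_polyC /=.
rewrite map_polyXn -!/(psnd _) !psnd_embF /thetaR /embF /vR /=.
rewrite -polyCB -polyCM -polyCD /psnd !map_polyC /=.
by rewrite ?(mul1r, subrr, polyC0, polyC1, mul0r, mulr0, addr0, mul1r) polyCD.
Qed.

Lemma constaIdealP c : constaIdeal n lam mu g1 g2 c <->
  constaCode n lam g2 (pfst c) /\ constaCode n (lam + mu) g1 (psnd c).
Proof.
split=> [[a [b ->]] | [[x e1] [y e2]]].
  have [-> ->] := constaIdeal_gen_components a b.
  by split; [exists (pfst b) | exists (psnd a)].
exists (map_poly (@embF p) y), (map_poly (@embF p) x).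
have [f1 f2] := constaIdeal_gen_components (map_poly (@embF p) y) (map_poly (@embF p) x).
by apply: poly_pair_eq; rewrite ?f1 ?f2 ?pfst_embF ?psnd_embF.
Qed.

End ConstacyclicIdeal.

Section ProductCodes.
Variable p : nat.
Local Notation K := 'F_p.
Local Notation RR := (Rp p).
Variable n : nat.
Variables (C : {poly RR} -> Prop) (A B : {poly K} -> Prop).
Hypothesis C_prod : forall c, C c <-> A (pfst c) /\ B (psnd c).

Lemma dualR_prod d : A 0 -> B 0 ->
  dualR n C d <-> dual_code n A (pfst d) /\ dual_code n B (psnd d).
Proof.
move=> A0 B0; split=> [[sd H] | [[s1 H1] [s2 H2]]].
  split; split=> [|c Ac]; rewrite ?(leq_trans (size_poly _ _) sd) //.
    have Cc : C (poly_pair c 0) by apply/C_prod; rewrite pfst_pair psnd_pair.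
    by have := congr1 fst (H _ Cc); rewrite -/(dotp _ _ _) dotp_fst pfst_pair.
  have Cc : C (poly_pair 0 c) by apply/C_prod; rewrite pfst_pair psnd_pair.
  by have := congr1 snd (H _ Cc); rewrite -/(dotp _ _ _) dotp_snd psnd_pair.
split=> [|c /C_prod [Ac Bc]]; first by rewrite -(poly_pairK d) size_poly_pair.
rewrite -/(dotp n c d); have := dotp_fst n c d; have := dotp_snd n c d.
by rewrite (H1 _ Ac) (H2 _ Bc); case: (dotp n c d) => x y /= -> ->.
Qed.

Variables lam mu : K.
Hypothesis lam2 : lam * lam = 1.
Hypothesis lam_mu : lam + mu = - lam.

Lemma grayPhi_gray_map c : grayPhi n lam mu c = gray_map n lam (pfst c) (psnd c).
Proof.
have er : map_poly (@rpart p) c = pfst c by [].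
have eq : map_poly (@qpart p) c = psnd c - pfst c.
  apply/polyP=> i; rewrite coef_map_id0; last by rewrite /qpart subrr.
  by rewrite coefB coef_pfst coef_psnd.
have emu : mu = - lam - lam by apply/(addrI lam); rewrite lam_mu addrA subrr add0r.
rewrite /grayPhi /gray_map er eq lam_mu emu -!mul_polyC !polyCM !polyCB !polyCN.
set L := lam%:P; have LL : L * L = 1 by rewrite -polyCM lam2.
move: (pfst c) (psnd c) ('X^n) => a b x.
apply/eqP; rewrite -subr_eq0; apply/eqP.
transitivity ((1 - L * L) * (b - a)); first by ring.
by rewrite LL subrr mul0r.
Qed.

Lemma grayImage_prodE y : grayImage n lam mu C y <-> gray_image n lam A B y.
Proof.
split=> [[c [/C_prod [Ac Bc] ->]] | [c1 [c2 [Ac1 Bc2 ->]]]].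
  by exists (pfst c), (psnd c); rewrite grayPhi_gray_map.
exists (poly_pair c1 c2); rewrite grayPhi_gray_map pfst_pair psnd_pair; split=> //.
by apply/C_prod; rewrite pfst_pair psnd_pair.
Qed.

End ProductCodes.

Lemma Fp_two_neq0 p : prime p -> odd p -> (2%:R : 'F_p) != 0.
Proof.
move=> p_pr p_odd; rewrite -(dvdn_pcharf (pchar_Fp p_pr)).
apply/negP => /(dvdn_leq (isT : (0 < 2)%N)).
by have := prime_gt1 p_pr; case: p p_odd {p_pr} => [|[|[|k]]].
Qed.

Lemma cyclicCodeE p m (g y : {poly 'F_p}) :
  cyclicCode m g y <-> constaCode m 1 g y.
Proof. by rewrite /constaCode polyC1. Qed.

Lemma hstar_mulE p (h1 h2 : {poly 'F_p}) : hstar h1 * hstar h2 =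
  ((h1`_0)^-1 * (h2`_0)^-1) *: (rev_poly (size h2) h2 * rev_poly (size h1) h1).
Proof. by rewrite /hstar [X in _ = _ *: X]mulrC -scalerAl -scalerAr scalerA. Qed.

Theorem theorem3p17 (p : nat) (p_prime : prime p) (p_odd : odd p)
  (n : nat) (n_gt0 : (0 < n)%N)
  (lam mu : 'F_p)
  (htheta : (lam = 1 /\ mu = -2) \/ (lam = -1 /\ mu = 2))
  (g1 g2 h1 h2 : {poly 'F_p})
  (g1_monic : g1 \is monic) (g2_monic : g2 \is monic)
  (g1_dvd : g1 %| 'X^n - (lam + mu)%:P) (g2_dvd : g2 %| 'X^n - lam%:P)
  (h1_def : g1 * h1 = 'X^n - (lam + mu)%:P)
  (h2_def : g2 * h2 = 'X^n - lam%:P) :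
  let C := constaIdeal n lam mu g1 g2 in
  (forall y, grayImage n lam mu (dualR n C) y
             <-> cyclicCode n.*2 (hstar h1 * hstar h2) y)
  /\
  (forall y, grayImage n lam mu (dualR n C) y
             <-> dualF n.*2 (grayImage n lam mu C) y).
Proof.
move=> C.
have [lam2 lam_mu] : lam * lam = 1 /\ lam + mu = - lam.
  by case: htheta => [[-> ->] | [-> ->]]; split; ring.
have two0 := Fp_two_neq0 p_prime p_odd.
rewrite lam_mu in h1_def.
set A := constaCode n lam g2; set B := constaCode n (- lam) g1.
have C_prod c : C c <-> A (pfst c) /\ B (psnd c) by rewrite /B -lam_mu; apply: constaIdealP.
have dualC_prod d : dualR n C d <-> dual_code n A (pfst d) /\ dual_code n B (psnd d).
  by apply: dualR_prod C_prod _ _ _; apply: constaCode0.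
split=> y; rewrite (grayImage_prodE n dualC_prod lam2 lam_mu).
  have lam0 := sqr1_neq0 lam2.
  rewrite cyclicCodeE hstar_mulE constaCodeZ; first exact: gray_image_dual_constaCode.
  rewrite mulf_neq0 // invr_eq0 ?(coef0_XnsubC_cofactor n_gt0 lam0 h2_def) //.
  by apply: (coef0_XnsubC_cofactor n_gt0 _ h1_def); rewrite oppr_eq0.
have sizeA c : A c -> (size c <= n)%N by apply: size_constaCode.
have sizeB c : B c -> (size c <= n)%N by apply: size_constaCode.
apply: iff_trans (gray_image_dual n_gt0 lam2 two0 y sizeA sizeB _ _) _; try exact: constaCode0.
by apply: dual_code_ext => z; apply: iff_sym; apply: (grayImage_prodE n C_prod lam2 lam_mu).
Qed.
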